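(* Let $n\ge1$, $q$ a prime power, and let $\mathcal{F}_1\neq\mathcal{F}_2$ be two coverings of $[n]$, neither of which contains a redundant basic set. Then the combinatorial metrics $d_{\mathcal{F}_1}$ and $d_{\mathcal{F}_2}$ on $\mathbb{F}_q^n$ are different.
   Context: A family $\mathcal{A}$ of subsets of $[n]$ is a covering of $X\subset[n]$ if $X\subset\bigcup_{A\in\mathcal{A}}A$. For a covering $\mathcal{F}$ of $[n]$ (elements called basic sets) and $x\in\mathbb{F}_q^n$ with $\mathrm{supp}(x)=\{i:x_i\neq0\}$, $\mathrm{wt}_{\mathcal{F}}(x)=\min\{|\mathcal{A}|:\mathcal{A}\subset\mathcal{F},\ \mathcal{A}\text{ covers }\mathrm{supp}(x)\}$ and $d_{\mathcal{F}}(x,y)=\mathrm{wt}_{\mathcal{F}}(x-y)$. A basic set $A\in\mathcal{F}$ is redundant if there is $B\in\mathcal{F}$ with $A\subsetneq B$. *)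

From mathcomp Require Import all_boot all_algebra all_field.
Set Implicit Arguments. Unset Strict Implicit. Unset Printing Implicit Defensive.
Import GRing.Theory.
Local Open Scope ring_scope.

Definition covers (n : nat) (Fam : {set {set 'I_n}}) (X : {set 'I_n}) : bool :=
  X \subset \bigcup_(A in Fam) A.

Definition is_covering (n : nat) (Fam : {set {set 'I_n}}) : bool :=
  covers Fam [set: 'I_n].

Definition redundant (n : nat) (Fam : {set {set 'I_n}}) (A : {set 'I_n}) : bool :=
  (A \in Fam) && [exists B in Fam, A \proper B].

Definition supp (F : fieldType) (n : nat) (x : 'rV[F]_n) : {set 'I_n} :=
  [set i | x 0 i != 0].

(* F-weight: min number of basic sets covering supp x.  The default value
   #|Fam| is attained by Fam itself when Fam is a covering of [n]. *)
Definition wtF (F : fieldType) (n : nat) (Fam : {set {set 'I_n}}) (x : 'rV[F]_n) : nat :=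
  \big[minn/#|Fam|]_(B : {set {set 'I_n}} | (B \subset Fam) && covers B (supp x)) #|B|.

Definition distF (F : fieldType) (n : nat) (Fam : {set {set 'I_n}}) (x y : 'rV[F]_n) : nat :=
  wtF Fam (x - y).

From mathcomp Require Import all_boot all_order all_algebra all_field.
Set Implicit Arguments. Unset Strict Implicit. Unset Printing Implicit Defensive.
Import Order.TTheory GRing.Theory.
Local Open Scope ring_scope.

(* Without redundant basic sets, a covering is determined by its vectors of
   weight one: those are exactly the nonzero vectors whose support lies in a
   basic set.  If A is basic for F1 but not for F2, the indicator of A has
   F1-weight one; if it also has F2-weight one, then A is strictly contained
   in some basic set B of F2, and no basic set of F1 can contain B (it would
   make A redundant), so the indicator of B has F2-weight one but not
   F1-weight one. *)

Section WeightOne.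
Variables (F : fieldType) (n : nat).
Implicit Types (Fam : {set {set 'I_n}}) (A B : {set 'I_n}) (x : 'rV[F]_n).

Definition indicator A : 'rV[F]_n := \row_i (i \in A)%:R.

Lemma supp_indicator A : supp (indicator A) = A.
Proof.
by apply/setP=> i; rewrite !inE mxE; case: (i \in A); rewrite ?oner_eq0 ?eqxx.
Qed.

Lemma wtF_le1 Fam x A : A \in Fam -> supp x \subset A -> (wtF Fam x <= 1)%N.
Proof.
move=> FamA sxA; rewrite /wtF -minEnat -leEnat; apply: (bigmin_inf [set A]).
  by rewrite sub1set FamA /covers big_set1.
by rewrite cards1.
Qed.

Lemma wtF_gt0 Fam x : Fam != set0 -> supp x != set0 -> (0 < wtF Fam x)%N.
Proof.
move=> Fam_neq0 sx_neq0; rewrite /wtF.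
apply: (big_ind (fun m => 0 < m)%N); first by rewrite card_gt0.
  by move=> a b a_gt0 b_gt0; rewrite leq_min a_gt0 b_gt0.
move=> B /andP[_]; apply: contraTT; rewrite -leqNgt leqn0 cards_eq0 => /eqP->.
by rewrite /covers big_set0 subset0.
Qed.

Lemma wtF_eq1 Fam x : is_covering Fam -> supp x != set0 ->
  (wtF Fam x == 1%N) = [exists A in Fam, supp x \subset A].
Proof.
move=> covFam sx_neq0; apply/eqP/existsP => [|[A /andP[FamA sxA]]]; last first.
  apply/eqP; rewrite eqn_leq (wtF_le1 FamA sxA) wtF_gt0 //.
  by apply/set0Pn; exists A.
rewrite /wtF.
apply: (big_ind (fun m => m = 1%N -> exists A, (A \in Fam) && (supp x \subset A)))
  => [|a b IHa IHb|B /andP[sBFam covB]].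
- (* the default value #|Fam| of the minimum: a single basic set covers [n] *)
  move/eqP/cards1P=> [A FamE]; exists A; rewrite FamE set11 /=.
  apply: subset_trans (subsetT _) _.
  by move: covFam; rewrite /is_covering /covers FamE big_set1.
- by rewrite /minn; case: ifP.
- move/eqP/cards1P=> [A BE]; exists A; rewrite -sub1set -BE sBFam /=.
  by move: covB; rewrite /covers BE big_set1.
Qed.

Lemma irredundant_covering_neq0 Fam A : (0 < n)%N -> is_covering Fam ->
  (forall B, ~~ redundant Fam B) -> A \in Fam -> A != set0.
Proof.
move=> n_gt0 covFam irrFam FamA; apply: contraNneq (irrFam A) => A0.
have /bigcupP[B FamB iB] := subsetP covFam (Ordinal n_gt0) (in_setT _).
rewrite /redundant FamA; apply/existsP; exists B.
by rewrite FamB A0 proper0; apply/set0Pn; exists (Ordinal n_gt0).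
Qed.

Lemma wtF_separates Fam1 Fam2 A :
  is_covering Fam1 -> is_covering Fam2 -> (forall B, ~~ redundant Fam1 B) ->
  A \in Fam1 -> A \notin Fam2 -> A != set0 ->
  exists x, wtF Fam1 x != wtF Fam2 x.
Proof.
move=> cov1 cov2 irr1 Fam1A Fam2A A_neq0.
have wt1A : wtF Fam1 (indicator A) == 1%N.
  rewrite wtF_eq1 ?supp_indicator //.
  by apply/existsP; exists A; rewrite Fam1A /=.
have [/eqP|wt2A] := eqVneq (wtF Fam2 (indicator A)) 1%N; last first.
  by exists (indicator A); rewrite (eqP wt1A) eq_sym.
rewrite wtF_eq1 ?supp_indicator // => /existsP[B /andP[Fam2B sAB]].
have ltAB : A \proper B.
  by rewrite properEneq sAB andbT; apply: contraNneq Fam2A => ->.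
have B_neq0 : B != set0 by apply: contraNneq A_neq0 => B0; rewrite -subset0 -B0.
exists (indicator B).
have -> : wtF Fam2 (indicator B) = 1%N.
  apply/eqP; rewrite wtF_eq1 ?supp_indicator //.
  by apply/existsP; exists B; rewrite Fam2B /=.
apply: contra (irr1 A); rewrite wtF_eq1 ?supp_indicator //.
move=> /existsP[C /andP[Fam1C sBC]].
rewrite /redundant Fam1A; apply/existsP; exists C.
by rewrite Fam1C (proper_sub_trans ltAB sBC).
Qed.

End WeightOne.

Theorem proposition2 (F : finFieldType) (n : nat) (Fam1 Fam2 : {set {set 'I_n}}) :
  (1 <= n)%N ->
  is_covering Fam1 -> is_covering Fam2 ->
  (forall A, ~~ redundant Fam1 A) -> (forall A, ~~ redundant Fam2 A) ->
  Fam1 != Fam2 ->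
  exists x y : 'rV[F]_n, distF Fam1 x y <> distF Fam2 x y.
Proof.
move=> n_gt0 cov1 cov2 irr1 irr2 neq12.
suff [x /eqP wt_neq] : exists x : 'rV[F]_n, wtF Fam1 x != wtF Fam2 x.
  by exists x, 0; rewrite /distF subr0.
have [A FamA_neq] : exists A, (A \in Fam1) != (A \in Fam2).
  apply/existsP; apply: contraNT neq12 => /existsPn sameA.
  by apply/eqP/setP=> A; apply/eqP; rewrite -[_ == _]negbK sameA.
have [Fam1A|Fam1A] := boolP (A \in Fam1).
  have Fam2A : A \notin Fam2 by move: FamA_neq; rewrite Fam1A; case: (A \in Fam2).
  exact: @wtF_separates F _ _ _ _ cov1 cov2 irr1 Fam1A Fam2A
    (irredundant_covering_neq0 n_gt0 cov1 irr1 Fam1A).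
have Fam2A : A \in Fam2.
  by move: FamA_neq; rewrite (negbTE Fam1A); case: (A \in Fam2).
have [x wt_neq] := @wtF_separates F _ _ _ _ cov2 cov1 irr2 Fam2A Fam1A
  (irredundant_covering_neq0 n_gt0 cov2 irr2 Fam2A).
by exists x; rewrite eq_sym.
Qed.
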